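(* Let $A=(a(i,j))_{i,j\in I}$ be a generalized Cartan matrix over $I=\{1,\dots,n\}$ and let $W^{\mathrm{spin}}=W^{\mathrm{spin}}(A)$ be the group with presentation $\langle r_1,\dots,r_n\mid r_i^8=1\ (i\in I);\ r_j^{-1}r_i^2r_j=r_i^2r_j^{2n(i,j)}\ (i\ne j);\ \underbrace{r_ir_jr_i\cdots}_{m_{ij}}=\underbrace{r_jr_ir_j\cdots}_{m_{ij}}\ (i\ne j)\rangle$. Then for all $i\ne j\in I$: (a) $[r_i^2,r_j^2]=r_j^{4n(i,j)}$ and $r_i^{4n(j,i)}=r_j^{4n(i,j)}$; (b) if $n(i,j)=n(j,i)=1$ then $r_i^4=r_j^4$, and otherwise $[r_i^2,r_j^2]=1$; (c) if $n(i,j)=0$ and $n(j,i)=1$ then $r_i^4=1$; (d) $r_jr_i^4r_j^{-1}=r_i^4$ if $n(i,j)=0$ and $r_jr_i^4r_j^{-1}=r_i^2r_j^2r_i^2r_j^2$ if $n(i,j)=1$; (e) $[r_j,r_i^4]=1$. In particular, the subgroup $\langle r_i^4\mid i\in I\rangle$ is central in $W^{\mathrm{spin}}$.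
   Context: A generalized Cartan matrix satisfies $a(i,i)=2$, $a(i,j)\in\mathbb Z_{\le0}$ for $i\neq j$, and $a(i,j)=0\iff a(j,i)=0$. For $i\ne j$: $n(i,j)=0$ if $a(i,j)$ is even and $n(i,j)=1$ if $a(i,j)$ is odd; $m_{ij}=2,3,4,6$ if $a(i,j)a(j,i)=0,1,2,3$ respectively, and $m_{ij}=0$ (no braid relation) if $a(i,j)a(j,i)\ge4$. Commutator convention $[x,y]=x^{-1}y^{-1}xy$. *)

From HB Require Import structures.
From mathcomp Require Import all_boot all_order all_algebra.
Set Implicit Arguments. Unset Strict Implicit. Unset Printing Implicit Defensive.
Import Order.TTheory GRing.Theory Num.Theory.

Definition is_GCM (n : nat) (A : 'M[int]_n) : Prop :=
  [/\ (forall i, A i i = 2%R),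
      (forall i j, i != j -> (A i j <= 0)%R) &
      (forall i j, A i j = 0%R <-> A j i = 0%R)].

Definition nij (n : nat) (A : 'M[int]_n) (i j : 'I_n) : nat :=
  if odd (absz (A i j)) then 1 else 0.

(* m_ij = 2,3,4,6 if a(i,j)a(j,i) = 0,1,2,3, and 0 (no relation) otherwise *)
Definition mij (n : nat) (A : 'M[int]_n) (i j : 'I_n) : nat :=
  match absz (A i j * A j i)%R with
  | 0 => 2 | 1 => 3 | 2 => 4 | 3 => 6 | _ => 0 end.

Fixpoint altprod (G : groupType) (x y : G) (m : nat) : G :=
  match m with 0 => 1%g | m'.+1 => (x * altprod y x m')%g end.

Inductive in_gen (G : groupType) (S : G -> Prop) : G -> Prop :=
  | gen_base x : S x -> in_gen S x
  | gen_one : in_gen S 1%g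
  | gen_mul x y : in_gen S x -> in_gen S y -> in_gen S (x * y)%g
  | gen_inv x : in_gen S x -> in_gen S (x^-1)%g.

(* Conjugating r_i^2 twice by r_j gives [r_i^2, r_j^2] = r_j^(4 n(i,j)); comparing
   with the relation for (j, i) and using r_j^8 = 1 gives r_i^(4 n(j,i)) =
   r_j^(4 n(i,j)), so r_j^4 commutes with r_i^2 when n(i,j) = 1. Squaring the
   defining relation then shows that r_j centralizes r_i^4, hence every r_i^4 is
   central. *)
From HB Require Import structures.
From mathcomp Require Import all_boot all_order all_algebra.
Set Implicit Arguments. Unset Strict Implicit. Unset Printing Implicit Defensive.
Import Order.TTheory GRing.Theory Num.Theory.
Local Open Scope group_scope.

Lemma conjXg_self (G : groupType) (y : G) k : (y ^+ k) ^ y = y ^+ k.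
Proof.
by apply/conjg_fixP/commgP/commute_sym/commuteX/commute_refl.
Qed.

Lemma conjg_fix_conjV (G : groupType) (x y : G) : x ^ y = x -> y * x * y^-1 = x.
Proof. by move=> xy; rewrite -{1}xy conjgE mulVKg mulgK. Qed.

Lemma invg_expg4 (G : groupType) (y : G) k :
  k <= 1 -> y ^+ 8 = 1 -> (y ^+ (4 * k))^-1 = y ^+ (4 * k).
Proof.
case: k => [|[|//]] _ y8; first by rewrite invg1.
by apply: mulg1_eq; rewrite -expgnDr.
Qed.

Lemma in_gen_commute (G : groupType) (S : G -> Prop) (z : G) :
  (forall s, S s -> commute z s) -> forall y, in_gen S y -> commute z y.
Proof.
move=> zS y; elim=> [s /zS //| | a b _ za _ zb | a _ za].
- exact: commute1.
- exact: commuteM.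
- exact: commuteV.
Qed.

Section SquareConjugation.
Variables (G : groupType) (x y : G) (k : nat).
Hypothesis conj_x2 : y^-1 * x ^+ 2 * y = x ^+ 2 * y ^+ (2 * k).

Lemma conjg_x2_y2 : (x ^+ 2) ^ (y ^+ 2) = x ^+ 2 * y ^+ (4 * k).
Proof.
have x2y : (x ^+ 2) ^ y = x ^+ 2 * y ^+ (2 * k) by rewrite conjgE mulgA.
rewrite expg2 conjgM x2y conjMg x2y conjXg_self -mulgA -expgnDr.
by rewrite -mulnDl.
Qed.

Lemma commg_x2_y2 : [~ x ^+ 2, y ^+ 2] = y ^+ (4 * k).
Proof. by rewrite commgEl conjg_x2_y2 mulKg. Qed.

End SquareConjugation.

Section RankTwo.
Variables (G : groupType) (x y : G) (n m : nat).
Hypotheses (y8 : y ^+ 8 = 1) (n_le1 : n <= 1) (m_le1 : m <= 1).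
Hypotheses (conj_xy : y^-1 * x ^+ 2 * y = x ^+ 2 * y ^+ (2 * n))
           (conj_yx : x^-1 * y ^+ 2 * x = y ^+ 2 * x ^+ (2 * m)).

Lemma expg4_eq : x ^+ (4 * m) = y ^+ (4 * n).
Proof.
by rewrite -(commg_x2_y2 conj_yx) -invgR (commg_x2_y2 conj_xy) invg_expg4.
Qed.

Lemma x2y2_sq : n = 1%N -> x ^+ 2 * y ^+ 2 * x ^+ 2 * y ^+ 2 = x ^+ 4.
Proof.
move=> n1; have y4x := expg4_eq; rewrite n1 muln1 in y4x.
have x2y4 : commute (x ^+ 2) (y ^+ 4).
  by rewrite -y4x; apply/commuteX2/commute_refl.
have -> : x ^+ 2 * y ^+ 2 * x ^+ 2 * y ^+ 2 = x ^+ 2 * y ^+ 4 * (x ^+ 2) ^ (y ^+ 2).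
  rewrite (expgnDr y 2 2) (mulgA (x ^+ 2) (y ^+ 2) (y ^+ 2)).
  by rewrite -(mulgA (x ^+ 2 * y ^+ 2)) -(mulgA (x ^+ 2 * y ^+ 2) (y ^+ 2)) -conjgC.
by rewrite (conjg_x2_y2 conj_xy) n1 -expg2 expgMn // -!expgnA y8 mulg1.
Qed.

Lemma conjg_x4 : (x ^+ 4) ^ y = x ^+ 4.
Proof.
rewrite [in LHS](expgnA x 2 2) conjXg conjgE mulgA conj_xy.
case: n n_le1 x2y2_sq => [|[|//]] _ sq; first by rewrite mulg1 -expgnA.
by rewrite expg2 (mulgA (x ^+ 2 * y ^+ 2)) sq.
Qed.

Lemma commg_y_x4 : [~ y, x ^+ 4] = 1.
Proof. by apply/eqP; rewrite commg1_sym; apply/conjg_fixP/conjg_x4. Qed.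

Lemma spin_rank2_relations :
  [/\ [~ x ^+ 2, y ^+ 2] = y ^+ (4 * n) /\ x ^+ (4 * m) = y ^+ (4 * n),
      (if (n == 1%N) && (m == 1%N) then x ^+ 4 = y ^+ 4
       else [~ x ^+ 2, y ^+ 2] = 1),
      ((n == 0%N) && (m == 1%N) -> x ^+ 4 = 1),
      (if n == 0%N then y * x ^+ 4 * y^-1 = x ^+ 4
       else y * x ^+ 4 * y^-1 = x ^+ 2 * y ^+ 2 * x ^+ 2 * y ^+ 2) &
      [~ y, x ^+ 4] = 1].
Proof.
have xy := commg_x2_y2 conj_xy; have yx := commg_x2_y2 conj_yx.
have x4y := expg4_eq; have fix_x4 := conjg_fix_conjV conjg_x4.
have yx4 := commg_y_x4.
have [n0 | n1] : n = 0%N \/ n = 1%N by case: (n) n_le1 => [|[|]]; auto.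
all: have [m0 | m1] : m = 0%N \/ m = 1%N by case: (m) m_le1 => [|[|]]; auto.
all: rewrite ?n0 ?n1 ?m0 ?m1 /= ?muln0 ?muln1 ?expg0 in xy yx x4y *.
all: split=> //.
- by rewrite -invgR yx invg1.
all: by rewrite fix_x4 x2y2_sq.
Qed.

End RankTwo.

Local Close Scope group_scope.

Theorem mainTheorem17 (n : nat) (A : 'M[int]_n) (hA : is_GCM A)
  (G : groupType) (r : 'I_n -> G)
  (h8 : forall i, (r i ^+ 8 = 1)%g)
  (hconj : forall i j, i != j ->
     ((r j)^-1 * r i ^+ 2 * r j = r i ^+ 2 * r j ^+ (2 * nij A i j))%g)
  (hbraid : forall i j, i != j ->
     altprod (r i) (r j) (mij A i j) = altprod (r j) (r i) (mij A i j)) :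
  (forall i j, i != j ->
     [/\ ([~ r i ^+ 2, r j ^+ 2] = r j ^+ (4 * nij A i j))%g
         /\ (r i ^+ (4 * nij A j i) = r j ^+ (4 * nij A i j))%g,
       (if (nij A i j == 1) && (nij A j i == 1)
        then (r i ^+ 4 = r j ^+ 4)%g
        else ([~ r i ^+ 2, r j ^+ 2] = 1)%g),
       ((nij A i j == 0) && (nij A j i == 1) -> (r i ^+ 4 = 1)%g),
       (if nij A i j == 0
        then (r j * r i ^+ 4 * (r j)^-1 = r i ^+ 4)%g
        else (r j * r i ^+ 4 * (r j)^-1
              = r i ^+ 2 * r j ^+ 2 * r i ^+ 2 * r j ^+ 2)%g) &
       ([~ r j, r i ^+ 4] = 1)%g])
  /\
  (forall x y, in_gen (fun z => exists i, z = (r i ^+ 4)%g) x ->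
     in_gen (fun z => exists i, z = r i) y -> (x * y = y * x)%g).
Proof.
have nij_le1 i j : nij A i j <= 1 by rewrite /nij; case: ifP.
split=> [i j ij | x y hx hy].
- have ji : j != i by rewrite eq_sym.
  exact: spin_rank2_relations (h8 j) (nij_le1 i j) (nij_le1 j i)
    (hconj i j ij) (hconj j i ji).
- apply: (in_gen_commute _ hy) => _ [j ->]; apply/commute_sym.
  apply: (in_gen_commute _ hx) => _ [i ->].
  have [<- | ij] := eqVneq i j; first exact/commuteX/commute_refl.
  have ji : j != i by rewrite eq_sym.
  apply/commgP/eqP.
  exact: commg_y_x4 (h8 j) (nij_le1 i j) (hconj i j ij) (hconj j i ji).
Qed.
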